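(* Let $\pi,\tau\in\mathfrak{S}_m$ be non-overlapping permutations. If $\pi$ and $\tau$ are c-Wilf equivalent, then $\pi$ and $\tau$ are super-strongly c-Wilf equivalent.
   Context: The standardization $\operatorname{st}(w)$ of a word of distinct integers replaces its smallest entry by 1, the next smallest by 2, etc. For $\pi\in\mathfrak{S}_m$ and $\sigma\in\mathfrak{S}_n$, $\operatorname{Em}(\pi,\sigma)=\{i\in[n-m+1]:\operatorname{st}(\sigma_i\cdots\sigma_{i+m-1})=\pi\}$. For a set $S$ of positive integers, $a^\pi_{n,S}$ is the number of $\sigma\in\mathfrak{S}_n$ with $\operatorname{Em}(\pi,\sigma)=S$. $\pi,\tau$ are c-Wilf equivalent if $a^\pi_{n,\emptyset}=a^\tau_{n,\emptyset}$ for all $n$, and super-strongly c-Wilf equivalent if $a^\pi_{n,S}=a^\tau_{n,S}$ for all $n,S$. The overlap set is $\mathcal{O}_\pi=\{i\in[m-1]:\operatorname{st}(\pi_{i+1}\cdots\pi_m)=\operatorname{st}(\pi_1\cdots\pi_{m-i})\}$; $\pi$ is non-overlapping if $\mathcal{O}_\pi=\{m-1\}$. *)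

From mathcomp Require Import all_boot all_fingroup.
Set Implicit Arguments. Unset Strict Implicit. Unset Printing Implicit Defensive.

(* One-line notation of a permutation s of {1..n}: the word s_1 ... s_n,
   with values in 1..n (internally 'I_n is {0..n-1}, so we add 1). *)
Definition word (n : nat) (s : 'S_n) : seq nat :=
  [seq (s i).+1 | i <- enum 'I_n].

Definition st (w : seq nat) : seq nat :=
  [seq (count (fun y => y < x) w).+1 | x <- w].

(* Factor sigma_i ... sigma_{i+m-1} (i is 1-indexed). *)
Definition factor (w : seq nat) (i m : nat) : seq nat := take m (drop i.-1 w).

(* Em(pi, sigma) = { i in [n-m+1] : st(sigma_i..sigma_{i+m-1}) = pi }, as a
   sorted list of 1-indexed positions. *)
Definition Em (m n : nat) (pi : 'S_m) (sigma : 'S_n) : seq nat :=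
  [seq i <- iota 1 (n - m + 1) | st (factor (word sigma) i m) == word pi].

(* a^pi_{n,S} = #{ sigma in S_n : Em(pi,sigma) = S } (equality as sets). *)
Definition a_count (m n : nat) (pi : 'S_m) (S : seq nat) : nat :=
  #|[set sigma : 'S_n | (all (fun i => i \in S) (Em pi sigma))
                        && (all (fun i => i \in Em pi sigma) S)]|.

Definition cWilf_equiv (m : nat) (pi tau : 'S_m) : Prop :=
  forall n : nat, a_count n pi [::] = a_count n tau [::].

Definition super_strong_cWilf_equiv (m : nat) (pi tau : 'S_m) : Prop :=
  forall (n : nat) (S : seq nat), a_count n pi S = a_count n tau S.

Definition overlap_set (m : nat) (pi : 'S_m) : seq nat :=
  [seq i <- iota 1 (m - 1) |
     st (drop i (word pi)) == st (take (m - i) (word pi))].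

Definition non_overlapping (m : nat) (pi : 'S_m) : Prop :=
  overlap_set pi = [:: m - 1].

(* Write b_n(T) for the number of permutations of length n having an occurrence
   of the pattern at every position of T.  If no window of T straddles the cut
   between p and p + 1, then b_n(T) = C(n, p) b_p(T_left) b_(n-p)(T_right), since
   a permutation is determined by the standardizations of its two halves and the
   set of values of its left half.  If a window sticks out of [1, n], or if two
   windows share more than one entry (impossible for a non-overlapping pattern),
   then b_n(T) = 0.  The only T escaping these cases is the chain 1, m, 2m - 1, ...
   of windows tiling [1, n].  By induction on n, the b-counts of the two patterns
   therefore agree on every other T, and inclusion-exclusion
   a_(n, {}) = sum_T (-1)^|T| b_n(T) together with c-Wilf equivalence forces
   agreement on the chain as well.  Finally b_n(T) = sum_(S >= T) a_(n, S) is
   triangular, so the a-counts agree. *)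

From mathcomp Require Import all_boot all_fingroup ssralg ssrint zify.
Set Implicit Arguments. Unset Strict Implicit. Unset Printing Implicit Defensive.
Import GRing.Theory.

(** * Standardization *)

Definition st_rank (w : seq nat) (x : nat) : nat := (count (fun y => y < x) w).+1.

Lemma size_st w : size (st w) = size w.
Proof. exact: size_map. Qed.

Lemma count_sumE (T : Type) (a : pred T) (r : seq T) :
  count a r = \sum_(x <- r) a x.
Proof. by rewrite -sum1_count big_mkcond. Qed.

Lemma count_ltn_split w x y : x <= y ->
  count (fun z => z < y) w = count (fun z => z < x) w + count (fun z => x <= z < y) w.
Proof. by move=> le_xy; elim: w => //= z w ->; lia. Qed.

Lemma st_rank_mono w : {in w &, {mono st_rank w : x y / x <= y}}.
Proof.
move=> x y xw yw; rewrite ltnS; case: (leqP x y) => [le_xy | lt_yx].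
  by rewrite (count_ltn_split _ le_xy) leq_addr.
apply/negbTE; rewrite -ltnNge (count_ltn_split _ (ltnW lt_yx)) -addn1 leq_add2l -has_count.
by apply/hasP; exists y => //=; rewrite leqnn.
Qed.

Lemma st_rank_inj w : {in w &, injective (st_rank w)}.
Proof. exact/incn_inj_in/st_rank_mono. Qed.

Lemma st_map_mono f w : {in w &, {mono f : x y / x <= y}} -> st (map f w) = st w.
Proof.
move=> f_mono; rewrite /st -map_comp; apply/eq_in_map => x xw /=.
by congr S; rewrite count_map; apply: eq_in_count => y yw /=; rewrite !ltnNge f_mono.
Qed.

Lemma st_map_rank w u : {subset u <= w} -> st (map (st_rank w) u) = st u.
Proof. by move=> uw; apply/st_map_mono/(sub_in2 uw)/st_rank_mono. Qed.

Lemma st_take_st d w : st (take d (st w)) = st (take d w).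
Proof. by rewrite -map_take st_map_rank // => x /mem_take. Qed.

Lemma st_drop_st d w : st (drop d (st w)) = st (drop d w).
Proof. by rewrite -map_drop st_map_rank // => x /mem_drop. Qed.

Lemma st_factor_st w i m : st (factor (st w) i m) = st (factor w i m).
Proof. by rewrite /factor -map_drop -map_take st_map_rank // => x /mem_take/mem_drop. Qed.

Lemma perm_iota1 u k : uniq u -> size u = k -> all (fun x => 0 < x <= k) u ->
  perm_eq u (iota 1 k).
Proof.
move=> u_uniq u_size /allP u_range; apply: uniq_perm => //; first exact: iota_uniq.
have [] // := @uniq_min_size _ u (iota 1 k) u_uniq; last by rewrite size_iota u_size.
by move=> x /u_range; rewrite mem_iota; lia.
Qed.

Lemma perm_st_iota u : uniq u -> perm_eq (st u) (iota 1 (size u)).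
Proof.
move=> u_uniq; apply: perm_iota1; rewrite ?size_st //.
  by rewrite map_inj_in_uniq //; apply: st_rank_inj.
apply/allP => _ /mapP [x xu ->]; rewrite /st_rank /= -(count_predC (fun y => y < x)).
by rewrite -[X in X < _]addn0 ltn_add2l -has_count; apply/hasP; exists x => //=; rewrite ltnn.
Qed.

Lemma st_inj u u' : uniq u -> perm_eq u u' -> st u = st u' -> u = u'.
Proof.
move=> u_uniq uu' st_uu'; have size_uu' := perm_size uu'.
apply: (@eq_from_nth _ 0) => // i ltiu.
have := congr1 (nth 0 ^~ i) st_uu'; rewrite /= !(nth_map 0) -?size_uu' //.
rewrite -(seq.permP uu') => eq_rank.
by apply: (st_rank_inj (mem_nth 0 ltiu) _ eq_rank); rewrite (perm_mem uu') mem_nth -?size_uu'.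
Qed.

(** * Splitting a permutation word *)

Definition pwords (n : nat) : seq (seq nat) := permutations (iota 1 n).

Lemma mem_pwords n w : (w \in pwords n) = perm_eq w (iota 1 n).
Proof. exact: mem_permutations. Qed.

Lemma uniq_pwords n : uniq (pwords n).
Proof. exact: permutations_uniq. Qed.

Lemma size_pwords n : size (pwords n) = n`!.
Proof. by rewrite size_permutations ?iota_uniq // size_iota. Qed.

Section PermutationWord.

Variables (n : nat) (w : seq nat).
Hypothesis w_pword : w \in pwords n.

Lemma pword_uniq : uniq w.
Proof. by move: w_pword; rewrite mem_pwords => /perm_uniq ->; apply: iota_uniq. Qed.

Lemma size_pword : size w = n.
Proof. by move: w_pword; rewrite mem_pwords => /perm_size ->; rewrite size_iota. Qed.

Lemma mem_pword v : (v \in w) = (0 < v <= n).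
Proof. by move: w_pword; rewrite mem_pwords => /perm_mem ->; rewrite mem_iota; lia. Qed.

Lemma st_take_pword p : p <= n -> st (take p w) \in pwords p.
Proof.
move=> le_pn; rewrite mem_pwords.
by have := perm_st_iota (take_uniq p pword_uniq); rewrite size_takel // size_pword.
Qed.

Lemma st_drop_pword p : st (drop p w) \in pwords (n - p).
Proof.
rewrite mem_pwords.
by have := perm_st_iota (drop_uniq p pword_uniq); rewrite size_drop size_pword.
Qed.

End PermutationWord.

Lemma sum_fibers (T U : eqType) (f : T -> U) (r : seq T) (s : seq U) (F : U -> nat) :
  uniq s -> {in r, forall x, f x \in s} ->
  \sum_(x <- r) F (f x) = \sum_(u <- s) F u * count (fun x => f x == u) r.
Proof.
move=> s_uniq; elim: r => [_ | x r IHr fr_s].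
  by rewrite big_nil big1 // => u _; rewrite muln0.
rewrite big_cons IHr => [|y yr]; last by apply: fr_s; rewrite inE yr orbT.
under [RHS]eq_bigr do rewrite /= mulnDr.
rewrite big_split /= [in RHS](bigD1_seq (f x)) ?fr_s ?mem_head //= eqxx muln1.
rewrite [X in _ = _ + X + _]big1 ?addn0 // => u.
by rewrite eq_sym => /negbTE->; rewrite muln0.
Qed.

Lemma bounded_sum_eq (I : eqType) (r : seq I) (F : I -> nat) c :
  {in r, forall i, F i <= c} -> \sum_(i <- r) F i = size r * c -> {in r, forall i, F i = c}.
Proof.
elim: r => [|x r IHr] // F_le; rewrite big_cons /= mulSn => sum_eq.
have le_x : F x <= c by apply: F_le; rewrite mem_head.
have le_r : {in r, forall i, F i <= c} by move=> i ir; apply: F_le; rewrite inE ir orbT.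
have sum_le : \sum_(i <- r) F i <= size r * c.
  have : \sum_(i <- r) F i <= \sum_(i <- r) c by rewrite big_seq [leqRHS]big_seq; exact: leq_sum.
  by rewrite big_const_seq iter_addn_0 count_predT mulnC.
move=> i; rewrite inE => /predU1P [-> | ir]; first lia.
by apply: IHr => //; lia.
Qed.

Definition split_st (p : nat) (w : seq nat) : seq nat * seq nat :=
  (st (take p w), st (drop p w)).

Definition head_values (n p : nat) (w : seq nat) : {set 'I_n} :=
  [set i : 'I_n | i.+1 \in take p w].

Section SplitFibers.

Variables n p : nat.
Hypothesis le_pn : p <= n.

Lemma card_head_values w : w \in pwords n -> #|head_values n p w| = p.
Proof.
move=> w_pw; have w_uniq := pword_uniq w_pw.
rewrite cardsE cardE /enum_mem size_filter -enumT.
rewrite -(count_map (fun i : 'I_n => i.+1) (mem (take p w))).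
have -> : [seq i.+1 | i : 'I_n <- enum 'I_n] = iota 1 n.
  by rewrite (map_comp S val) val_enum_ord -(iotaDl 1 0).
rewrite -(seq.permP (_ : perm_eq w (iota 1 n))) -?mem_pwords // -size_filter.
have le_pw : p <= size w by rewrite (size_pword w_pw).
rewrite -[RHS](size_takel le_pw).
apply/perm_size/uniq_perm; rewrite ?filter_uniq ?take_uniq // => v.
by rewrite mem_filter andb_idr // => /mem_take.
Qed.

Lemma head_values_inj w1 w2 : w1 \in pwords n -> w2 \in pwords n ->
  split_st p w1 = split_st p w2 -> head_values n p w1 = head_values n p w2 -> w1 = w2.
Proof.
move=> w1_pw w2_pw [st_take12 st_drop12] hv12.
have take12 : take p w1 =i take p w2.
  have sub w w' : w \in pwords n -> head_values n p w = head_values n p w' ->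
      {subset take p w <= take p w'}.
    move=> w_pw hv v vt; have := mem_take vt; rewrite (mem_pword w_pw) => v_range.
    have lt_vn : v.-1 < n by lia.
    by move/setP: hv => /(_ (Ordinal lt_vn)); rewrite !inE /= prednK ?vt //; lia.
  by move=> v; apply/idP/idP; apply: sub; rewrite // hv12.
have uniq_w1 := pword_uniq w1_pw; have uniq_w2 := pword_uniq w2_pw.
have perm_take : perm_eq (take p w1) (take p w2) by apply: uniq_perm; rewrite ?take_uniq.
have eq_take : take p w1 = take p w2 by apply: st_inj; rewrite ?take_uniq.
have perm_drop : perm_eq (drop p w1) (drop p w2).
  rewrite -(perm_cat2l (take p w1)) {2}eq_take !cat_take_drop.
  by apply: (@perm_trans _ (iota 1 n)); rewrite -?mem_pwords // perm_sym -mem_pwords.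
have eq_drop : drop p w1 = drop p w2 by apply: st_inj; rewrite ?drop_uniq.
by rewrite -(cat_take_drop p w1) eq_take eq_drop cat_take_drop.
Qed.

Lemma split_fiber_le xy : count (fun w => split_st p w == xy) (pwords n) <= 'C(n, p).
Proof.
rewrite -size_filter -[in leqRHS](card_ord n) -card_draws cardE.
rewrite -(size_map (head_values n p)).
apply: uniq_leq_size => [|A /mapP [w]]; last first.
  by rewrite mem_filter => /andP [_ w_pw] ->; rewrite mem_enum inE card_head_values.
rewrite map_inj_in_uniq ?filter_uniq ?uniq_pwords // => w1 w2.
rewrite !mem_filter => /andP [/eqP fib1 w1_pw] /andP [/eqP fib2 w2_pw].
by apply: head_values_inj; rewrite // fib1 fib2.
Qed.

Lemma uniq_split_pairs : uniq [seq (x, y) | x <- pwords p, y <- pwords (n - p)].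
Proof. by rewrite allpairs_uniq ?uniq_pwords // => -[? ?] [? ?]. Qed.

Lemma split_st_pairs :
  {in pwords n, forall w, split_st p w \in [seq (x, y) | x <- pwords p, y <- pwords (n - p)]}.
Proof.
move=> w w_pw; apply/allpairsP; exists (split_st p w).
by rewrite /= (st_take_pword w_pw le_pn) (st_drop_pword w_pw).
Qed.

(* The n! words are spread over p! (n - p)! fibers of size at most C(n, p),
   hence all fibers have exactly C(n, p) elements. *)
Lemma split_fiber_eq x y : x \in pwords p -> y \in pwords (n - p) ->
  count (fun w => split_st p w == (x, y)) (pwords n) = 'C(n, p).
Proof.
move=> x_pw y_pw.
apply: (bounded_sum_eq (F := fun xy => count (fun w => split_st p w == xy) _)
  (r := [seq (x, y) | x <- pwords p, y <- pwords (n - p)])).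
- by move=> ? _; apply: split_fiber_le.
- have := sum_fibers (fun _ => 1) uniq_split_pairs split_st_pairs.
  rewrite sum1_size size_pwords size_allpairs !size_pwords mulnC bin_fact // => ->.
  by under [RHS]eq_bigr do rewrite mul1n.
- by apply/allpairsP; exists (x, y).
Qed.

Lemma count_split (P Q : pred (seq nat)) :
  count (fun w => P (st (take p w)) && Q (st (drop p w))) (pwords n) =
  'C(n, p) * count P (pwords p) * count Q (pwords (n - p)).
Proof.
rewrite count_sumE.
rewrite (sum_fibers (fun xy => P xy.1 && Q xy.2 : nat) uniq_split_pairs split_st_pairs).
rewrite big_allpairs !count_sumE -mulnA big_distrlr big_distrr /=.
apply: eq_big_seq => x x_pw; rewrite big_distrr /=; apply: eq_big_seq => y y_pw.
by rewrite split_fiber_eq // -mulnb mulnC.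
Qed.

End SplitFibers.

(** * Marked occurrences *)

(* Positions are 1-indexed; position 0 is junk and behaves like 1, hence the
   positivity hypotheses on lists of positions below. *)
Definition occurs (m : nat) (pw w : seq nat) (i : nat) : bool := st (factor w i m) == pw.

Definition marked_count (m : nat) (pw : seq nat) (n : nat) (T : seq nat) : nat :=
  count (fun w => all (occurs m pw w) T) (pwords n).

Definition straddles (m p i : nat) : bool := i <= p < i + m - 1.

Lemma occurs_st m pw w i : occurs m pw (st w) i = occurs m pw w i.
Proof. by rewrite /occurs st_factor_st. Qed.

Lemma occurs_take m pw w p i : 0 < i -> i + m - 1 <= p ->
  occurs m pw (take p w) i = occurs m pw w i.
Proof. by move=> i_gt0 le_ip; rewrite /occurs /factor !take_drop take_takel //; lia. Qed.

Lemma occurs_drop m pw w p i : p < i -> occurs m pw (drop p w) (i - p) = occurs m pw w i.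
Proof.
move=> lt_pi; rewrite /occurs /factor drop_drop.
by congr (st (take _ (drop _ _)) == _); lia.
Qed.

Lemma marked_count_split m pw n p T : p <= n -> all (fun i => 0 < i) T ->
    ~~ has (straddles m p) T ->
  marked_count m pw n T = 'C(n, p) * marked_count m pw p [seq i <- T | i <= p]
                            * marked_count m pw (n - p) [seq i - p | i <- T & p < i].
Proof.
move=> le_pn T_pos T_nstr; rewrite /marked_count -count_split //; apply: eq_count => w.
elim: T T_pos T_nstr => //= i T IHT /andP [i_gt0 T_pos].
rewrite negb_or => /andP [i_nstr T_nstr].
rewrite IHT //; case: (leqP i p) => [le_ip | lt_pi] /=.
  have le_ip' : i + m - 1 <= p by move: i_nstr; rewrite /straddles; lia.
  by rewrite occurs_st occurs_take // andbA.
by rewrite occurs_st occurs_drop // andbCA.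
Qed.

Definition nonoverlapping_word (m : nat) (pw : seq nat) : Prop :=
  forall d, 0 < d < m - 1 -> st (drop d pw) != st (take (m - d) pw).

Lemma occurs_overlap m pw w i j : nonoverlapping_word m pw -> 0 < i < j -> j < i + m - 1 ->
  ~~ (occurs m pw w i && occurs m pw w j).
Proof.
move=> no_pw lt_ij lt_jm; apply/negP => /andP [/eqP occ_i /eqP occ_j].
have /no_pw/negP : 0 < j - i < m - 1 by lia.
apply; apply/eqP; rewrite -{1}occ_i -occ_j st_drop_st st_take_st /factor.
have le_dm : j - i <= m by lia.
rewrite -{1}(subnK le_dm) -take_drop drop_drop take_takel ?leq_subr //.
by congr (st (take _ (drop _ _))); lia.
Qed.

Lemma occurs_size m pw w i : 0 < m -> size pw = m -> size w < i + m - 1 ->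
  ~~ occurs m pw w i.
Proof.
move=> m_gt0 size_pw lt_wi; apply/eqP => /(congr1 size).
by rewrite size_st size_pw /factor size_take size_drop; case: ifP; lia.
Qed.

Definition windows_within (m n : nat) (T : seq nat) : bool :=
  all (fun i => (0 < i) && (i + m - 1 <= n)) T.

Definition windows_linked (m n : nat) (T : seq nat) : bool :=
  all (fun p => has (straddles m p) T) (iota 1 n.-1).

Definition windows_spaced (m : nat) (T : seq nat) : bool :=
  all (fun i => all (fun j => (i < j) ==> (i + m - 1 <= j)) T) T.

(* The windows of a chain tile [1, n], consecutive windows sharing exactly one
   entry: T = [:: 1; m; 2m - 1; ...] with n = 1 (mod m - 1). *)
Definition window_chain (m n : nat) (T : seq nat) : bool :=
  [&& windows_within m n T, windows_linked m n T & windows_spaced m T].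

Lemma window_chain_uniq m n T T' : 1 < m ->
  window_chain m n T -> window_chain m n T' -> T =i T'.
Proof.
move=> m_gt1.
have step S S' x : window_chain m n S -> window_chain m n S' ->
    (forall y, y < x -> (y \in S) = (y \in S')) -> x \in S -> x \in S'.
  case/and3P=> /allP S_in _ /allP S_sp /and3P [_ /allP S'_lk _] eq_lt_x xS.
  have /andP [x_gt0 x_le] := S_in x xS.
  have /S'_lk /hasP [j jS' /andP [le_jx lt_xj]] : x \in iota 1 n.-1 by rewrite mem_iota; lia.
  case: (ltngtP j x) => [lt_jx | | <-] //; last lia.
  have jS : j \in S by rewrite eq_lt_x.
  by have /allP /(_ x xS) := S_sp j jS; rewrite lt_jx /=; lia.
move=> chT chT' x; elim/ltn_ind: x => x IHx; apply/idP/idP; first exact: step IHx.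
by apply: step => // y /IHx ->.
Qed.

Lemma marked_count_eq0 m pw n T :
  {in pwords n, forall w, ~~ all (occurs m pw w) T} -> marked_count m pw n T = 0.
Proof. by move=> no_occ; apply/eqP; rewrite -leqn0 leqNgt -has_count; apply/hasPn. Qed.

Lemma marked_count_outside m pw n T : 0 < m -> size pw = m -> all (fun i => 0 < i) T ->
  ~~ windows_within m n T -> marked_count m pw n T = 0.
Proof.
move=> m_gt0 size_pw /allP T_pos /allPn [i iT]; rewrite T_pos //= -ltnNge => lt_ni.
apply: marked_count_eq0 => w w_pw; apply/allP => /(_ i iT); apply/negP.
by apply: occurs_size; rewrite ?(size_pword w_pw).
Qed.

Lemma marked_count_unspaced m pw n T : nonoverlapping_word m pw -> all (fun i => 0 < i) T ->
  ~~ windows_spaced m T -> marked_count m pw n T = 0.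
Proof.
move=> no_pw /allP T_pos /allPn [i iT /allPn [j jT]].
rewrite negb_imply -ltnNge => /andP [lt_ij lt_jm].
apply: marked_count_eq0 => w _; apply/allP => occ_T.
have lt_0ij : 0 < i < j by rewrite T_pos.
by have /negP := occurs_overlap w no_pw lt_0ij lt_jm; rewrite !occ_T.
Qed.

(** * Inclusion-exclusion over subsets *)

Lemma eq_set0_incl_excl (T : finType) (E : {set T}) :
  ((E == set0)%:R : int) = (\sum_(A : {set T}) (A \subset E)%:R * (-1) ^+ #|A|)%R.
Proof.
transitivity (\prod_(i : T) ((if i \in E then -1 else 0) + 1) : int)%R.
  have [-> | [x xE]] := set_0Vmem E.
    by rewrite eqxx big1 // => i _; rewrite inE add0r.
  have /negbTE -> : E != set0 by apply/set0Pn; exists x.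
  by rewrite (bigD1 x) //= xE addNr mul0r.
rewrite bigA_distr; apply: eq_bigr => A _.
have [AE | /subsetPn [x xA xE]] := boolP (A \subset E).
  rewrite mul1r -big_mkcond /= -prodr_const; apply: eq_bigr => i iA.
  by rewrite (subsetP AE i iA).
by rewrite mul0r (bigD1 x) //= xA (negbTE xE) mul0r.
Qed.

Lemma superset_sum_inj (T : finType) (f g : {set T} -> nat) :
    (forall A : {set T},
       \sum_(B : {set T} | A \subset B) f B = \sum_(B : {set T} | A \subset B) g B) ->
  f =1 g.
Proof.
move=> sum_eq A; have [k] := ubnP #|~: A|; elim: k A => [|k IHk] A; first by [].
rewrite ltnS => le_k; have := sum_eq A.
rewrite (bigD1 A) ?subxx // [in RHS](bigD1 A) ?subxx //.
rewrite (eq_bigr g) => [/addIn -> // | B /andP [AB neBA]].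
have ltAB : A \proper B by rewrite properEneq eq_sym neBA.
by apply: IHk; apply: leq_trans le_k; rewrite proper_card // properC.
Qed.

(* A set A : {set 'I_k} encodes the positions i.+1, i \in A, among 1, ..., k. *)
Definition occ_set (m : nat) (pw : seq nat) (k : nat) (w : seq nat) : {set 'I_k} :=
  [set i : 'I_k | occurs m pw w i.+1].

Definition positions (k : nat) (A : {set 'I_k}) : seq nat := [seq (val i).+1 | i <- enum A].

Definition pos_set (k : nat) (S : seq nat) : {set 'I_k} := [set i : 'I_k | i.+1 \in S].

Definition exact_count (m : nat) (pw : seq nat) (n : nat) (A : {set 'I_(n - m + 1)}) : nat :=
  count (fun w => occ_set m pw (n - m + 1) w == A) (pwords n).
Arguments exact_count : clear implicits.

Lemma mem_positions k (A : {set 'I_k}) (i : 'I_k) : (i.+1 \in positions A) = (i \in A).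
Proof. by rewrite (mem_map (f := fun i : 'I_k => (val i).+1)) ?mem_enum // => ? ? [] /val_inj. Qed.

Lemma positions_gt0 k (A : {set 'I_k}) : all (fun i => 0 < i) (positions A).
Proof. by rewrite all_map; apply/allP. Qed.

Lemma iota1P k i : reflect (exists j : 'I_k, i = j.+1) (i \in iota 1 k).
Proof.
apply: (iffP idP) => [|[j ->]]; rewrite mem_iota; last by have := ltn_ord j; lia.
move=> i_range; have lt_ik : i.-1 < k by lia.
by exists (Ordinal lt_ik); rewrite /= prednK //; lia.
Qed.

Lemma positions_pos_set k (S : seq nat) :
  all (fun i => i \in iota 1 k) S -> positions (pos_set k S) =i S.
Proof.
move=> /allP S_range v; apply/mapP/idP => [[i] | vS]; first by rewrite mem_enum inE => iS ->.
by have /iota1P [j eq_vj] := S_range v vS; exists j; rewrite // mem_enum inE -eq_vj.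
Qed.

Lemma all_occurs_positions m pw k (A : {set 'I_k}) w :
  all (occurs m pw w) (positions A) = (A \subset occ_set m pw k w).
Proof.
rewrite all_map; apply/allP/subsetP => [occ_A i iA | A_occ i]; last first.
  by rewrite mem_enum => /A_occ; rewrite inE.
by rewrite inE; apply: occ_A; rewrite mem_enum.
Qed.

Lemma marked_count_positions m pw n (A : {set 'I_(n - m + 1)}) :
  marked_count m pw n (positions A) = \sum_(B : {set _} | A \subset B) exact_count m pw n B.
Proof.
rewrite /marked_count (eq_count (all_occurs_positions m pw A)) count_sumE.
rewrite /exact_count; under [RHS]eq_bigr do rewrite count_sumE.
rewrite exchange_big /=; apply: eq_bigr => w _.
set E := occ_set m pw _ w; have [AE | nAE] := boolP (A \subset E).
  rewrite (bigD1 E) //= eqxx big1 // => B /andP [_ neBE].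
  by rewrite eq_sym (negbTE neBE).
by rewrite big1 // => B AB; case: eqVneq => // EB; rewrite EB AB in nAE.
Qed.

Lemma exact_count0_incl_excl m pw n :
  ((exact_count m pw n set0)%:R : int) =
  (\sum_(A : {set 'I_(n - m + 1)}) (-1) ^+ #|A| * (marked_count m pw n (positions A))%:R)%R.
Proof.
rewrite /exact_count count_sumE natr_sum; under eq_bigr do rewrite eq_set0_incl_excl.
rewrite exchange_big /=; apply: eq_bigr => A _.
rewrite /marked_count count_sumE natr_sum big_distrr /=; apply: eq_bigr => w _.
by rewrite all_occurs_positions mulrC.
Qed.

Section Comparison.

Variables (m : nat) (pw1 pw2 : seq nat).
Hypotheses (m_gt1 : 1 < m) (size_pw1 : size pw1 = m) (size_pw2 : size pw2 = m).
Hypotheses (no_pw1 : nonoverlapping_word m pw1) (no_pw2 : nonoverlapping_word m pw2).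

Lemma marked_count_eq_nonchain n :
    (forall n', n' < n -> forall T, all (fun i => 0 < i) T ->
       marked_count m pw1 n' T = marked_count m pw2 n' T) ->
  forall T, all (fun i => 0 < i) T -> ~~ window_chain m n T ->
  marked_count m pw1 n T = marked_count m pw2 n T.
Proof.
move=> IHn T T_pos; have m_gt0 : 0 < m by lia.
have [T_in | T_out] := boolP (windows_within m n T); last by rewrite !marked_count_outside.
have [T_sp | T_nsp] := boolP (windows_spaced m T); last by rewrite !marked_count_unspaced.
rewrite /window_chain T_in T_sp andbT /= => /allPn [p]; rewrite mem_iota => p_range T_nstr.
have le_pn : p <= n by lia.
rewrite !(marked_count_split _ le_pn T_pos T_nstr) !IHn //; try lia.
  by rewrite all_map; apply/allP => i; rewrite mem_filter /=; lia.
by rewrite all_filter; apply: sub_all T_pos => i /= ->; rewrite implybT.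
Qed.

Hypothesis avoid_eq : forall n, exact_count m pw1 n set0 = exact_count m pw2 n set0.

(* Inclusion-exclusion writes the avoidance count through all marked counts, and
   the chain is the only term not already known to agree. *)
Lemma marked_count_eq n T : all (fun i => 0 < i) T ->
  marked_count m pw1 n T = marked_count m pw2 n T.
Proof.
elim/ltn_ind: n T => n IHn T T_pos.
have [chT | ] := boolP (window_chain m n T); last exact: marked_count_eq_nonchain.
pose AT := pos_set (n - m + 1) T.
have others A : A != AT -> ((-1) ^+ #|A| * (marked_count m pw1 n (positions A))%:R =
                             (-1) ^+ #|A| * (marked_count m pw2 n (positions A))%:R :> int)%R.
  move=> neA; rewrite (marked_count_eq_nonchain IHn (positions_gt0 A)) //.
  apply: contra neA => chA; apply/eqP/setP => i.
  by rewrite inE -(window_chain_uniq m_gt1 chA chT) mem_positions.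
have eq_AT : marked_count m pw1 n (positions AT) = marked_count m pw2 n (positions AT).
  have := @exact_count0_incl_excl m pw1 n; rewrite avoid_eq exact_count0_incl_excl.
  rewrite (bigD1 AT) // [in RHS](bigD1 AT) //=.
  rewrite (eq_bigr _ others).
  by move/addIr/(can_inj (signrMK _)); rewrite !natz => -[].
have posT : positions AT =i T.
  apply: positions_pos_set; have /and3P [T_in _ _] := chT.
  by apply: sub_all T_in => i; rewrite mem_iota; lia.
by move: eq_AT; rewrite /marked_count !(eq_count (fun w => eq_all_r posT (occurs m _ w))).
Qed.

Lemma exact_count_eq n A : exact_count m pw1 n A = exact_count m pw2 n A.
Proof.
apply: superset_sum_inj A => A; rewrite -!marked_count_positions.
exact/marked_count_eq/positions_gt0.
Qed.

End Comparison.

(** * Permutations as words *)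

Lemma size_word n (s : 'S_n) : size (word s) = n.
Proof. by rewrite size_map size_enum_ord. Qed.

Lemma word_pwords n (s : 'S_n) : word s \in pwords n.
Proof.
rewrite mem_pwords; apply: perm_iota1; rewrite ?size_word //.
  by rewrite map_inj_uniq ?enum_uniq // => i j [] /val_inj /perm_inj.
by apply/allP => _ /mapP [i _ ->]; rewrite /= ltn_ord.
Qed.

Lemma word_inj n : injective (@word n).
Proof.
move=> s t eq_st; apply/permP => i; apply: val_inj.
by have [] := (eq_in_map _ _ _).2 eq_st i (mem_enum _ i).
Qed.

Lemma card_word n (C : pred (seq nat)) : #|[set s : 'S_n | C (word s)]| = count C (pwords n).
Proof.
rewrite cardsE cardE /enum_mem size_filter -enumT -(count_map (@word n)).
apply/seq.permP/uniq_perm; rewrite ?uniq_pwords ?(map_inj_uniq (@word_inj n)) ?enum_uniq //.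
have [] // := @uniq_min_size _ [seq word s | s <- enum 'S_n] (pwords n).
- by rewrite (map_inj_uniq (@word_inj n)) enum_uniq.
- by move=> _ /mapP [s _ ->]; apply: word_pwords.
- by rewrite size_map size_pwords -cardE card_Sn.
Qed.

Definition occurrences (m : nat) (pw : seq nat) (k : nat) (w : seq nat) : seq nat :=
  filter (occurs m pw w) (iota 1 k).

Lemma same_occurrences m pw k S w :
  all (fun i => i \in S) (occurrences m pw k w) && all (fun i => i \in occurrences m pw k w) S =
  all (fun i => i \in iota 1 k) S && (occ_set m pw k w == pos_set k S).
Proof.
have iota_ord (j : 'I_k) : j.+1 \in iota 1 k by apply/iota1P; exists j.
apply/andP/andP => [[/allP ES /allP SE] | [/allP Sk /eqP/setP occS]]; split.
- by apply/allP => i /SE; rewrite mem_filter => /andP [].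
- apply/eqP/setP => j; rewrite !inE; apply/idP/idP => [occ_j | jS].
    by apply: ES; rewrite mem_filter occ_j iota_ord.
  by have := SE _ jS; rewrite mem_filter => /andP [].
- apply/allP => i; rewrite mem_filter => /andP [occ_i /iota1P [j eq_ij]].
  by have := occS j; rewrite !inE -eq_ij occ_i.
- apply/allP => i iS; have /iota1P [j eq_ij] := Sk i iS.
  by have := occS j; rewrite !inE -eq_ij iS mem_filter => ->; rewrite eq_ij iota_ord.
Qed.

Lemma a_countE m n (pi : 'S_m) (S : seq nat) :
  a_count n pi S =
  all (fun i => i \in iota 1 (n - m + 1)) S * exact_count m (word pi) n (pos_set _ S).
Proof.
pose E w := occurrences m (word pi) (n - m + 1) w.
transitivity (count (fun w => all (fun i => i \in S) (E w) && all (fun i => i \in E w) S)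
                    (pwords n)).
  by rewrite -card_word.
rewrite (eq_count (fun w => same_occurrences _ _ _ S w)).
have [Sk | nSk] := boolP (all _ S); rewrite ?mul1n ?mul0n; first exact: eq_count.
exact: count_pred0.
Qed.

Lemma non_overlapping_gt1 m (pi : 'S_m) : non_overlapping pi -> 1 < m.
Proof.
move=> no_pi; have : m - 1 \in overlap_set pi by rewrite no_pi mem_head.
by rewrite mem_filter mem_iota => /andP [_]; lia.
Qed.

Lemma word_nonoverlapping m (pi : 'S_m) :
  non_overlapping pi -> nonoverlapping_word m (word pi).
Proof.
move=> no_pi d d_range; apply/eqP => overlap_d.
have : d \in overlap_set pi by rewrite mem_filter overlap_d eqxx mem_iota; lia.
by rewrite no_pi inE => /eqP; lia.
Qed.

Theorem theorem5p4 (m : nat) (pi tau : 'S_m) :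
  non_overlapping pi -> non_overlapping tau ->
  cWilf_equiv pi tau -> super_strong_cWilf_equiv pi tau.
Proof.
move=> no_pi no_tau wilf n S; rewrite !a_countE; congr (_ * _).
apply: exact_count_eq (non_overlapping_gt1 no_pi) (size_word pi) (size_word tau)
  (word_nonoverlapping no_pi) (word_nonoverlapping no_tau) _ n _ => k.
have pos_set0 : pos_set (k - m + 1) [::] = set0 by apply/setP => i; rewrite !inE.
by have := wilf k; rewrite !a_countE pos_set0 !mul1n.
Qed.
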